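(* Assume $\mathfrak b=\aleph_1$ and fix the family $\{g_\alpha:\alpha<\omega_1\}$ as below. Let $G \leq {}^\omega 2$ be a subgroup and let $\langle \mathcal T_\alpha : \alpha<\omega_1\rangle$ satisfy properties (i), (ii), (iii) below. Then it also satisfies property (iv); hence it is a $G$-matrix.
   Context: ${}^\omega 2$ is the Cantor space with bitwise addition modulo $2$. $\mathbb S$ is the set of perfect subtrees of ${}^{<\omega}2$ ordered by inclusion; $[T]$ is the set of branches of $T$; for $x\in{}^\omega 2$, $x+T=\{\sigma+x\restriction|\sigma|:\sigma\in T\}$. A node $\sigma\in T$ is splitting if $\sigma^\frown0,\sigma^\frown1\in T$; $T$ is skew if for each $n$ there is at most one splitting node of length $n$. The splitting predecessors of $s\in T$ are the splitting nodes of $T$ properly contained in $s$; $h_T(n)=\min\{k:\text{some node of }T\text{ of length }k\text{ has }n\text{ splitting predecessors}\}$. $g\le^* f$ means $g(n)\le f(n)$ for almost all $n$. $\{g_\alpha:\alpha<\omega_1\}\subseteq{}^\omega\omega$ is fixed with $\alpha<\beta\Rightarrow g_\alpha\le^* g_\beta$ and such that for every $f\in{}^\omega\omega$ there is $\alpha$ with $g_\alpha\not\le^* f$. For $S,T\in\mathbb S$, $S$ is somewhere dense in $T$ if there is $s\in T$ with $T_s=\{t\in T:t\subseteq s\lor s\subseteq t\}\subseteq S$. A $G$-matrix is a sequence $\langle\mathcal T_\alpha:\alpha<\omega_1\rangle$ with $\mathcal T=\bigcup_\alpha\mathcal T_\alpha$ such that: (i) $\mathcal T\subseteq\mathbb S$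 consists of skew trees; (ii) $g_\alpha\le^* h_T$ for all $T\in\mathcal T_\alpha$; (iii) for all $S\neq T$ in $\mathcal T_\alpha$ and all $x\in G$, $x+S$ and $T$ are incompatible (equivalently $|(x+[S])\cap[T]|\le\aleph_0$); (iv) for every $T\in\mathbb S$ the set $\{(x,S)\in G\times\mathcal T: x+S\text{ is somewhere dense in }T\}$ is at most countable. *)

From HB Require Import structures.
From mathcomp Require Import all_boot all_order.
From mathcomp Require Import boolp classical_sets cardinality.
Set Implicit Arguments. Unset Strict Implicit. Unset Printing Implicit Defensive.
Local Open Scope classical_set_scope.

(* Cantor space ^omega 2 : nat -> bool, group operation = bitwise xor. *)
Definition cantor := nat -> bool.
Definition cadd (x y : cantor) : cantor := fun n => xorb (x n) (y n).
Definition czero : cantor := fun _ => false.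

(* G is a subgroup of (^omega 2, +). (Every element is its own inverse.) *)
Definition is_subgroup (G : set cantor) : Prop :=
  G czero /\ (forall x y, G x -> G y -> G (cadd x y)).

Definition tree := set (seq bool).

Definition splitting (T : tree) (s : seq bool) : Prop :=
  T (rcons s false) /\ T (rcons s true).

Definition perfect_tree (T : tree) : Prop :=
  [/\ T [::],
      (forall s t, prefix t s -> T s -> T t) &
      (forall s, T s -> exists t, [/\ T t, prefix s t & splitting T t])].

Definition skew (T : tree) : Prop :=
  forall s t, T s -> T t -> splitting T s -> splitting T t ->
    size s = size t -> s = t.

(* number of splitting predecessors of s (splitting nodes properly contained in s) *)
Definition nsplitpred (T : tree) (s : seq bool) : nat :=
  count (fun i => `[< splitting T (take i s) >]) (iota 0 (size s)).

Definition has_node_with (T : tree) (n k : nat) : Prop :=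
  exists s, [/\ T s, size s = k & nsplitpred T s = n].

(* h_T(n) = min{k : some node of T of length k has n splitting predecessors}
   (default 0 if no such k exists, which never happens for perfect T) *)
Definition hT (T : tree) (n : nat) : nat :=
  match pselect (exists k, `[< has_node_with T n k >]) with
  | left H => ex_minn H
  | right _ => 0
  end.

Definition le_star (g f : nat -> nat) : Prop :=
  exists N, forall n, N <= n -> g n <= f n.

Definition addseq (x : cantor) (s : seq bool) : seq bool :=
  [seq xorb (nth false s i) (x i) | i <- iota 0 (size s)].
Definition shift (x : cantor) (T : tree) : tree :=
  [set t | exists2 s, T s & t = addseq x s].

Definition compatible (S T : tree) : Prop :=
  exists R, [/\ perfect_tree R, R `<=` S & R `<=` T].

Definition subtree_at (T : tree) (s : seq bool) : tree :=
  [set t | T t /\ (prefix t s \/ prefix s t)].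

Definition somewhere_dense (S T : tree) : Prop :=
  exists2 s, T s & subtree_at T s `<=` S.

(* (I, lt) is (order-isomorphic to) omega_1: a strict well-order, uncountable,
   all of whose proper initial segments are countable *)
Definition is_omega1 (I : Type) (lt : I -> I -> Prop) : Prop :=
  [/\ (forall a, ~ lt a a),
      (forall a b c, lt a b -> lt b c -> lt a c),
      (forall a b, lt a b \/ a = b \/ lt b a) &
      well_founded lt] /\
  (~ countable (@setT I) /\ (forall a, countable [set b | lt b a])).

Definition scale_family (I : Type) (lt : I -> I -> Prop) (g : I -> nat -> nat) : Prop :=
  (forall a b, lt a b -> le_star (g a) (g b)) /\
  (forall f : nat -> nat, exists a, ~ le_star (g a) f).

Definition union_matrix (I : Type) (M : I -> set tree) : set tree :=
  [set T | exists a, M a T].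

Definition prop_i (I : Type) (M : I -> set tree) : Prop :=
  forall T, union_matrix M T -> perfect_tree T /\ skew T.
Definition prop_ii (I : Type) (g : I -> nat -> nat) (M : I -> set tree) : Prop :=
  forall a T, M a T -> le_star (g a) (hT T).
Definition prop_iii (I : Type) (G : set cantor) (M : I -> set tree) : Prop :=
  forall a S T, M a S -> M a T -> S <> T ->
    forall x, G x -> ~ compatible (shift x S) T.
Definition prop_iv (I : Type) (G : set cantor) (M : I -> set tree) : Prop :=
  forall T, perfect_tree T ->
    countable [set p : cantor * tree |
                 [/\ G p.1, union_matrix M p.2 & somewhere_dense (shift p.1 p.2) T]].

From mathcomp Require Import all_boot all_order.
From mathcomp Require Import boolp classical_sets cardinality.
Set Implicit Arguments. Unset Strict Implicit. Unset Printing Implicit Defensive.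
Local Open Scope classical_set_scope.

(* Fix a node s of the perfect tree T.  If T_s is contained in x + S with S in level a,
   then splitting nodes of T_s are carried to splitting nodes of S, so h_S <= h_{T_s}
   pointwise and g_a <=* h_{T_s}; as the g_a are unbounded and <=*-increasing, only
   countably many levels a can occur for s.  Within one level, S is determined by (iii)
   (distinct S, S' of the level would make (x + x') + S compatible with S'), and then x
   is determined because a skew tree has at most one splitting node of each length.
   Summing over the countably many nodes s gives (iv). *)

Lemma size_addseq x s : size (addseq x s) = size s.
Proof. by rewrite size_map size_iota. Qed.

Lemma nth_addseq x s i : i < size s ->
  nth false (addseq x s) i = xorb (nth false s i) (x i).
Proof. by move=> lt_is; rewrite (nth_map 0) ?size_iota // nth_iota. Qed.

Lemma take_addseq x n s : take n (addseq x s) = addseq x (take n s).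
Proof.
apply: (@eq_from_nth _ false); first by rewrite size_addseq !size_take size_addseq.
move=> i; rewrite size_take_min size_addseq ltn_min => /andP[lt_in lt_is].
by rewrite nth_take // !nth_addseq ?size_take_min ?ltn_min ?lt_in // nth_take.
Qed.

Lemma addseq_rcons x s b :
  addseq x (rcons s b) = rcons (addseq x s) (xorb b (x (size s))).
Proof.
apply: (@eq_from_nth _ false); first by rewrite size_rcons !size_addseq size_rcons.
move=> i; rewrite size_addseq size_rcons ltnS => le_is.
rewrite nth_addseq ?size_rcons ?ltnS // !nth_rcons size_addseq.
by case: ltngtP le_is => // [lt_is|->] _; first rewrite nth_addseq.
Qed.

Lemma addseq_cadd x y s : addseq y (addseq x s) = addseq (cadd x y) s.
Proof.
apply: (@eq_from_nth _ false); first by rewrite !size_addseq.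
move=> i; rewrite !size_addseq => lt_is.
rewrite !nth_addseq ?size_addseq // /cadd.
by case: (nth false s i); case: (x i); case: (y i).
Qed.

Lemma caddC : commutative cadd.
Proof. by move=> x y; apply: funext => n; rewrite /cadd; case: (x n); case: (y n). Qed.

Lemma caddxx x : cadd x x = czero.
Proof. by apply: funext => n; rewrite /cadd; case: (x n). Qed.

Lemma addseq0 s : addseq czero s = s.
Proof.
apply: (@eq_from_nth _ false); first by rewrite size_addseq.
by move=> i; rewrite size_addseq => lt_is; rewrite nth_addseq //; case: (nth false s i).
Qed.

Lemma addseqK x : involutive (addseq x).
Proof. by move=> s; rewrite addseq_cadd caddxx addseq0. Qed.

Lemma shiftE x T : shift x T = [set t | T (addseq x t)].
Proof.
apply/seteqP; split=> [t [s Ts ->]|t Tt]; first by rewrite /= addseqK.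
by exists (addseq x t); rewrite ?addseqK.
Qed.

Lemma prefix_takeE (s t : seq bool) : prefix s t -> take (size s) t = s.
Proof. by rewrite prefixE => /eqP. Qed.

Lemma splitting_sub (S T : tree) s : S `<=` T -> splitting S s -> splitting T s.
Proof. by move=> sub_ST [S0 S1]; split; apply: sub_ST. Qed.

Lemma splitting_shift x T s : splitting (shift x T) s <-> splitting T (addseq x s).
Proof.
rewrite shiftE /splitting /= !addseq_rcons.
by case: (x (size s)); split=> -[].
Qed.

Lemma nsplitpred_take T j u : j <= size u ->
  nsplitpred T (take j u) = count (fun i => `[< splitting T (take i u) >]) (iota 0 j).
Proof.
move=> le_ju; rewrite /nsplitpred size_takel //; apply: eq_in_count => i.
by rewrite mem_iota add0n => /andP[_ lt_ij]; rewrite take_takel // ltnW.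
Qed.

Lemma nsplitpred_prefix T t u : prefix t u -> nsplitpred T t <= nsplitpred T u.
Proof.
move=> pre_tu; have le_tu := size_prefix pre_tu.
rewrite -(prefix_takeE pre_tu) nsplitpred_take // /nsplitpred.
by rewrite -(subnKC le_tu) iotaD count_cat leq_addr.
Qed.

Lemma nsplitpred_rcons T u b :
  nsplitpred T (rcons u b) = nsplitpred T u + `[< splitting T u >].
Proof.
have take_u : take (size u) (rcons u b) = u by rewrite -cats1 take_size_cat.
rewrite {1}/nsplitpred size_rcons -addn1 iotaD count_cat /= add0n addn0 take_u.
by rewrite -nsplitpred_take ?size_rcons // take_u.
Qed.

Lemma nsplitpred_sub (S T : tree) t : S `<=` T -> nsplitpred S t <= nsplitpred T t.
Proof.
move=> sub_ST; apply: sub_count => i /asboolP split_i.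
by apply/asboolP; apply: splitting_sub split_i.
Qed.

Lemma nsplitpred_shift x T t : nsplitpred (shift x T) t = nsplitpred T (addseq x t).
Proof.
rewrite /nsplitpred size_addseq; apply: eq_count => i.
by rewrite take_addseq; apply/asboolP/asboolP => /splitting_shift.
Qed.

Lemma count_iota_reaches (P : pred nat) L n : n <= count P (iota 0 L) ->
  exists2 j, j <= L & count P (iota 0 j) = n.
Proof.
elim: L => [|L IH] le_n; first by exists 0; move: le_n; rewrite leqn0 => /eqP.
case: (leqP n (count P (iota 0 L))) => [/IH [j le_jL <-]|lt_n].
  by exists j; rewrite // leqW.
exists L.+1 => //; apply/eqP; rewrite eqn_leq le_n andbT.
rewrite -[L.+1]addn1 iotaD count_cat /= add0n addn0.
by case: (P L); rewrite ?addn1 ?addn0 // ltnW.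
Qed.

Lemma node_with_nsplitpred (T : tree) t n :
  (forall s u, prefix u s -> T s -> T u) -> T t -> n <= nsplitpred T t ->
  exists u, [/\ T u, size u <= size t & nsplitpred T u = n].
Proof.
move=> Tpre Tt /count_iota_reaches [j le_jt cnt_j].
exists (take j t); split; first exact: Tpre (prefix_take _ _) Tt.
  by rewrite size_takel.
by rewrite nsplitpred_take.
Qed.

Lemma hT_le (T : tree) u n :
  (forall s t, prefix t s -> T s -> T t) -> T u -> n <= nsplitpred T u ->
  hT T n <= size u.
Proof.
move=> Tpre Tu le_n; have [v [Tv le_vu cnt_v]] := node_with_nsplitpred Tpre Tu le_n.
rewrite /hT; case: pselect => // ex_k; case: ex_minnP => k _ min_k.
by apply: leq_trans le_vu; apply: min_k; apply/asboolP; exists v.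
Qed.

Lemma hT_node (T : tree) n : (exists t, T t /\ nsplitpred T t = n) ->
  exists t, [/\ T t, size t = hT T n & nsplitpred T t = n].
Proof.
move=> [t [Tt cnt_t]]; rewrite /hT; case: pselect => [ex_k|no_k].
  by case: ex_minnP => k /asboolP [t' [? ? ?]] _; exists t'.
by exfalso; apply: no_k; exists (size t); apply/asboolP; exists t.
Qed.

Lemma perfect_splitting_above T : perfect_tree T -> forall m,
  exists t, [/\ T t, m <= size t & splitting T t].
Proof.
move=> [T0 _ Tsplit]; elim=> [|m [t [Tt le_mt [Tt0 _]]]].
  by have [t [Tt _ split_t]] := Tsplit _ T0; exists t.
have [u [Tu pre_tu split_u]] := Tsplit _ Tt0.
exists u; split=> //; apply: leq_trans (size_prefix pre_tu).
by rewrite size_rcons ltnS.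
Qed.

Lemma perfect_nsplitpred_unbounded T : perfect_tree T -> forall n,
  exists t, T t /\ n <= nsplitpred T t.
Proof.
move=> [T0 _ Tsplit]; elim=> [|n [t [Tt le_nt]]]; first by exists [::].
have [u [Tu pre_tu split_u]] := Tsplit t Tt.
exists (rcons u false); split; first by case: split_u.
rewrite nsplitpred_rcons (asboolT split_u) addn1 ltnS.
by apply: leq_trans le_nt (nsplitpred_prefix _ pre_tu).
Qed.

Lemma prefix_total (a b c : seq bool) : prefix a c -> prefix b c ->
  prefix a b \/ prefix b a.
Proof.
move=> /prefix_takeE ta /prefix_takeE tb.
case: (leqP (size a) (size b)) => [le_ab|lt_ba]; [left|right].
  by rewrite -ta -(take_takel c le_ab) tb prefix_take.
by rewrite -tb -(take_takel c (ltnW lt_ba)) ta prefix_take.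
Qed.

Lemma subtree_at_perfect T s : perfect_tree T -> T s -> perfect_tree (subtree_at T s).
Proof.
move=> [T0 Tpre Tsplit] Ts; split.
- by split; last by left; apply: prefix0s.
- move=> t u pre_ut [Tt cmp_ts]; split; first exact: Tpre pre_ut Tt.
  case: cmp_ts => [pre_ts|pre_st]; first by left; apply: prefix_trans pre_ut pre_ts.
  exact: prefix_total pre_ut pre_st.
- move=> t [Tt cmp_ts].
  have [w [Tw pre_sw pre_tw]] : exists w, [/\ T w, prefix s w & prefix t w].
    by case: cmp_ts => ?; [exists s | exists t]; rewrite prefix_refl.
  have [u [Tu pre_wu [Tu0 Tu1]]] := Tsplit w Tw.
  have pre_su := prefix_trans pre_sw pre_wu.
  exists u; split; [by split=> //; right | exact: prefix_trans pre_tw pre_wu |].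
  by split; split=> //; right; apply: prefix_trans pre_su (prefix_rcons _ _).
Qed.

Lemma shift_perfect x T : perfect_tree T -> perfect_tree (shift x T).
Proof.
move=> [T0 Tpre Tsplit]; rewrite shiftE; split=> /=.
- exact: T0.
- move=> s t pre_ts Ts; rewrite -(prefix_takeE pre_ts) -take_addseq.
  by apply: Tpre Ts; apply: prefix_take.
- move=> s Ts; have [u [Tu pre_u split_u]] := Tsplit _ Ts.
  exists (addseq x u); split; first by rewrite addseqK.
    by rewrite -[s](addseqK x) -(prefix_takeE pre_u) -take_addseq prefix_take.
  by rewrite -shiftE splitting_shift addseqK.
Qed.

Lemma hT_shift_le (R S : tree) x : perfect_tree R -> perfect_tree S ->
  R `<=` shift x S -> forall n, hT S n <= hT R n.
Proof.
move=> pR [_ Spre _] sub_RS n.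
have [t [Rt le_nt]] := perfect_nsplitpred_unbounded pR n.
have [_ Rpre _] := pR; have [u [Ru _ cnt_u]] := node_with_nsplitpred Rpre Rt le_nt.
have [v [Rv <- cnt_v]] := hT_node (ex_intro _ u (conj Ru cnt_u)).
rewrite -(size_addseq x); apply: hT_le => //; first by move: (sub_RS v Rv); rewrite shiftE.
by rewrite -nsplitpred_shift -{1}cnt_v nsplitpred_sub.
Qed.

Lemma skew_shift_unique (R S : tree) x y : perfect_tree R -> skew S ->
  R `<=` shift x S -> R `<=` shift y S -> x = y.
Proof.
rewrite !shiftE => pR skS sub_x sub_y; apply: funext => i.
have [t [Rt lt_it split_t]] := perfect_splitting_above pR i.+1.
have split_z z : R `<=` shift z S -> splitting S (addseq z t).
  by move=> sub_z; apply/splitting_shift/(splitting_sub sub_z).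
have /(congr1 (nth false)) /(congr1 (@^~ i)) : addseq x t = addseq y t.
  apply: skS; [exact: sub_x | exact: sub_y | | | by rewrite !size_addseq];
    apply: split_z; by rewrite shiftE.
by rewrite !nth_addseq //; case: (nth false t i); case: (x i); case: (y i).
Qed.

Lemma shift_compatible (R S S' : tree) x y : perfect_tree R ->
  R `<=` shift x S -> R `<=` shift y S' -> compatible (shift (cadd x y) S) S'.
Proof.
rewrite !shiftE => pR sub_x sub_y; exists (shift y R); split.
- exact: shift_perfect.
- by move=> t; rewrite shiftE /= => /sub_x /=; rewrite addseq_cadd caddC.
- by move=> t; rewrite shiftE => /sub_y /=; rewrite addseqK.
Qed.

Lemma subset1_countable T (A : set T) : is_subset1 A -> countable A.
Proof.
move=> A1; apply/countable_injP; exists (fun=> 0) => a b.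
by rewrite !in_setE => Aa Ab _; apply: A1.
Qed.

Lemma le_star_trans f g h : le_star f g -> le_star g h -> le_star f h.
Proof.
move=> [N1 le_fg] [N2 le_gh]; exists (maxn N1 N2) => n; rewrite geq_max => /andP[n1 n2].
exact: leq_trans (le_fg n n1) (le_gh n n2).
Qed.

Lemma scale_bounded_countable (I : Type) (lt : I -> I -> Prop) (g : I -> nat -> nat) :
  is_omega1 lt -> scale_family lt g ->
  forall f, countable [set a | le_star (g a) f].
Proof.
move=> [[_ _ lt_total _] [_ lt_countable]] [g_incr g_unbounded] f.
have [b not_le_b] := g_unbounded f.
apply: sub_countable (lt_countable b); apply: subset_card_le => a /= le_a.
case: (lt_total a b) => [//|[eq_ab|lt_ba]]; exfalso; apply: not_le_b.
  by rewrite -eq_ab.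
exact: le_star_trans (g_incr _ _ lt_ba) le_a.
Qed.

Section Levels.

Variables (I : Type) (g : I -> nat -> nat) (G : set cantor) (M : I -> set tree).
Hypothesis GD : forall x y, G x -> G y -> G (cadd x y).
Hypothesis M_i : prop_i M.
Hypothesis M_ii : prop_ii g M.
Hypothesis M_iii : prop_iii G M.

Lemma covering_level_le_star R a x S : perfect_tree R -> M a S ->
  R `<=` shift x S -> le_star (g a) (hT R).
Proof.
move=> pR MaS sub_RS; have [pS _] := M_i (ex_intro _ a MaS).
have [N le_gh] := M_ii MaS; exists N => n le_Nn.
exact: leq_trans (le_gh n le_Nn) (hT_shift_le pR pS sub_RS n).
Qed.

Lemma covering_level_subset1 R a : perfect_tree R ->
  is_subset1 [set p : cantor * tree | [/\ G p.1, M a p.2 & R `<=` shift p.1 p.2]].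
Proof.
move=> pR [x S] [y S'] [/= Gx MaS sub_x] [/= Gy MaS' sub_y].
have [eq_SS'|neq_SS'] := pselect (S = S'); last first.
  by have := M_iii MaS MaS' neq_SS' (GD Gx Gy); case; apply: shift_compatible sub_y.
rewrite -eq_SS' in sub_y *; have [_ skS] := M_i (ex_intro _ a MaS).
by rewrite (skew_shift_unique pR skS sub_x sub_y).
Qed.

End Levels.

Theorem mainTheorem16 (I : Type) (lt : I -> I -> Prop) (g : I -> nat -> nat)
  (G : set cantor) (M : I -> set tree) :
  is_omega1 lt -> scale_family lt g -> is_subgroup G ->
  prop_i M -> prop_ii g M -> prop_iii G M ->
  prop_iv G M.
Proof.
move=> omega1 scale [_ GD] M_i M_ii M_iii T pT.
pose cover s a := [set p : cantor * tree |
  [/\ G p.1, M a p.2 & subtree_at T s `<=` shift p.1 p.2]].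
apply: (@sub_countable _ _ _
  (\bigcup_(s in T) \bigcup_(a in [set a | le_star (g a) (hT (subtree_at T s))]) cover s a)).
  apply: subset_card_le => -[x S] [/= Gx [a MaS] [s Ts sub_TsS]].
  exists s => //; exists a; last by split.
  exact: (covering_level_le_star M_i M_ii (subtree_at_perfect pT Ts) MaS sub_TsS).
apply: bigcup_countable => // s Ts.
apply: bigcup_countable => [|a _]; first exact: scale_bounded_countable omega1 scale _.
exact/subset1_countable/(covering_level_subset1 GD M_i M_iii)/subtree_at_perfect.
Qed.
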